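(* Let $S$ be an $a$-cap free and $b$-cup free configuration with a fixed slope labeling $s$, and let $\alpha_i(p)$ ($p \in S$, $1 \le i \le a-2$) be its $\alpha$-statistic. Then: (1) for every point $p$, $1 \leq \alpha_1(p) \leq \alpha_2(p) \leq \cdots \leq \alpha_{a-2}(p) \leq b-1$; consequently $\alpha = (\alpha_1,\dots,\alpha_{a-2})$ is a map from $S$ to $T_{a,b} = \{(x_1,\dots,x_{a-2}) \in \mathbb{N}^{a-2} : 1 \le x_1 \le \cdots \le x_{a-2} \le b-1\}$; (2) for any two points $x<y$ of $S$ such that $s(xy)=i$, we have $\alpha_i(x) < \alpha_i(y)$; in particular the map $\alpha$ is injective.
   Context: A configuration is a finite set $S$ of points with a linear order $<$ and, for every $3$-element subset, an arbitrary assignment declaring it either a cap or a cup. Points $x_1<\cdots<x_a$ form an $a$-cup (resp. $a$-cap) if every consecutive triple $\{x_{i-1},x_i,x_{i+1}\}$, $1<i<a$, is assigned cup (resp. cap); $1$- and $2$-element sets are both caps and cups. The length (size) of a cup is its number of points; a cup $x_1\cdots x_a$ with $a\ge2$ ends with the point $x_a$ and the edge $x_{a-1}x_a$. $S$ is $a$-cap free (resp. $b$-cup free) if it contains no $a$-cap (resp. $b$-cup). An edge is a pair $x<y$, written $xy$. A slope labeling of an $a$-cap free configuration $S$ is an assignment of an integer $s(xy)\in\{1,\dots,a-2\}$ to every edge such that for any $x<y<z$, $s(xy)\le s(yz)$ implies $\{x,y,z\}$ is a $3$-cup. The $\alpha$-statistic: for $p \in S$ and $1\le i\le a-2$, $\alpha_i(p)$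 is the maximum length of a cup that ends with the point $p$ and with an edge of label $\le i$; if there is no such cup, $\alpha_i(p)=1$. *)

From mathcomp Require Import all_boot all_order.
Set Implicit Arguments. Unset Strict Implicit. Unset Printing Implicit Defensive.

(* A configuration on n points: the points are 'I_n with their natural
   linear order.  [cup x y z] (for x < y < z) says the triple {x,y,z} is a
   cup; otherwise it is a cap.  Values of [cup] on non-increasing triples
   are irrelevant. *)

Section Config.
Variable n : nat.
Variable cup : 'I_n -> 'I_n -> 'I_n -> bool.

Fixpoint triples_ok (P : 'I_n -> 'I_n -> 'I_n -> bool) (s : seq 'I_n) : bool :=
  match s with
  | x :: ((y :: z :: _) as t) => P x y z && triples_ok P t
  | _ => true
  end.

Definition pts (A : {set 'I_n}) : seq 'I_n :=
  sort (fun x y : 'I_n => x <= y) (enum A).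

Definition is_cup (A : {set 'I_n}) : bool := triples_ok cup (pts A).
Definition is_cap (A : {set 'I_n}) : bool :=
  triples_ok (fun x y z => ~~ cup x y z) (pts A).

Definition cap_free (a : nat) : Prop :=
  forall A : {set 'I_n}, is_cap A -> #|A| <> a.
Definition cup_free (b : nat) : Prop :=
  forall A : {set 'I_n}, is_cup A -> #|A| <> b.

Definition slope_labeling (a : nat) (s : 'I_n -> 'I_n -> nat) : Prop :=
  (forall x y : 'I_n, x < y -> 1 <= s x y <= a - 2) /\
  (forall x y z : 'I_n, x < y -> y < z -> s x y <= s y z -> cup x y z).

Definition ends_with (s : 'I_n -> 'I_n -> nat) (i : nat) (p : 'I_n)
    (A : {set 'I_n}) : bool :=
  match rev (pts A) with
  | p' :: q :: _ => (p' == p) && (s q p <= i)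
  | _ => false
  end.

Definition alpha (s : 'I_n -> 'I_n -> nat) (i : nat) (p : 'I_n) : nat :=
  maxn 1 (\max_(A : {set 'I_n} | is_cup A && ends_with s i p A) #|A|).

End Config.

From mathcomp Require Import all_boot all_order.

(* A cup ending with x by an edge of label at most s(xy) extends by y to a cup
   ending with y: its last triple (w, x, y) has s(wx) <= s(xy), which the slope
   labeling turns into a cup.  Hence alpha_{s(xy)}(x) < alpha_{s(xy)}(y), and
   since s(xy) ranges in [1, a-2] this separates any two points.  Monotonicity
   in i is immediate from the definition, and the bound b - 1 is b-cup freeness.
   The a-cap freeness is only needed for a slope labeling to exist. *)

Set Implicit Arguments.
Unset Strict Implicit.
Unset Printing Implicit Defensive.

Section IncreasingListing.
Variable n : nat.

Let ltI : rel 'I_n := fun x y => x < y.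

Lemma pts_sorted (A : {set 'I_n}) : sorted ltI (pts A).
Proof.
rewrite -(sorted_map (f := val) (e' := ltn)) ltn_sorted_uniq_leq.
rewrite (map_inj_uniq val_inj) sort_uniq enum_uniq sorted_map.
by apply: sort_sorted => x y; apply: leq_total.
Qed.

Lemma mem_pts (A : {set 'I_n}) x : (x \in pts A) = (x \in A).
Proof. by rewrite mem_sort mem_enum. Qed.

Lemma size_pts (A : {set 'I_n}) : size (pts A) = #|A|.
Proof. by rewrite size_sort cardE. Qed.

Lemma pts_eq (A : {set 'I_n}) (l : seq 'I_n) :
  sorted ltI l -> A =i l -> pts A = l.
Proof.
move=> sorted_l eqAl; apply: (@irr_sorted_eq _ ltI) => //.
- by move=> y x z; apply: ltn_trans.
- by move=> x; apply: ltnn.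
- exact: pts_sorted.
- by move=> x; rewrite mem_pts eqAl.
Qed.

Lemma pts_set1 (p : 'I_n) : pts [set p] = [:: p].
Proof. by apply: pts_eq => // x; rewrite !inE. Qed.

Lemma pts_set2 (x y : 'I_n) : x < y -> pts [set x; y] = [:: x; y].
Proof.
move=> lt_xy; apply: pts_eq; first by rewrite /= andbT.
by move=> z; rewrite !inE.
Qed.

Lemma pts_setU1_rcons (A : {set 'I_n}) (y : 'I_n) :
  sorted ltI (rcons (pts A) y) -> pts (y |: A) = rcons (pts A) y.
Proof.
move=> sorted_Ay; apply: pts_eq => // z.
by rewrite in_setU1 mem_rcons inE mem_pts.
Qed.

Lemma sorted_rcons2 (e : rel 'I_n) (l : seq 'I_n) x y :
  sorted e (rcons (rcons l x) y) = sorted e (rcons l x) && e x y.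
Proof. by case: l => [|h t] /=; rewrite ?andbT // rcons_path last_rcons. Qed.

Lemma triples_ok_take P (l : seq 'I_n) k :
  triples_ok P l -> triples_ok P (take k l).
Proof.
elim: l k => [|x [|y [|z l]] IH] [|[|[|k]]] //= /andP[Pxyz ok_l].
by rewrite Pxyz; apply: (IH k.+2).
Qed.

Lemma triples_ok_rcons P (l : seq 'I_n) w x y :
  triples_ok P (rcons (rcons l w) x) -> P w x y ->
  triples_ok P (rcons (rcons (rcons l w) x) y).
Proof.
elim: l => [|u [|v [|t l]] IH] /=; first by move=> _ ->.
- by move=> /andP[-> _] ->.
- by move=> /andP[-> ok] P_wxy; apply: IH.
- by move=> /andP[-> ok] P_wxy; apply: IH.
Qed.

Section EndsWith.
Variable s : 'I_n -> 'I_n -> nat.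

Lemma ends_with_rcons2 i p q l (A : {set 'I_n}) :
  pts A = rcons (rcons l q) p -> ends_with s i p A = (s q p <= i).
Proof. by move=> ptsA; rewrite /ends_with ptsA !rev_rcons /= eqxx. Qed.

Lemma ends_withP i p (A : {set 'I_n}) :
  ends_with s i p A -> exists l q, pts A = rcons (rcons l q) p /\ s q p <= i.
Proof.
rewrite /ends_with; case E: (rev (pts A)) => [|p' [|q r]] // /andP[/eqP <- le_i].
by exists (rev r), q; rewrite -(revK (pts A)) E !rev_cons.
Qed.

Lemma ends_withW i j p (A : {set 'I_n}) :
  i <= j -> ends_with s i p A -> ends_with s j p A.
Proof.
move=> le_ij; rewrite /ends_with; case: (rev (pts A)) => [|p' [|q r]] //.
by move=> /andP[-> le_i]; apply: leq_trans le_ij.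
Qed.

End EndsWith.

Section Alpha.
Variables (cup : 'I_n -> 'I_n -> 'I_n -> bool) (s : 'I_n -> 'I_n -> nat).

Lemma alpha_gt0 i p : 0 < alpha cup s i p.
Proof. exact: leq_maxl. Qed.

Lemma leq_card_alpha i p (A : {set 'I_n}) :
  is_cup cup A -> ends_with s i p A -> #|A| <= alpha cup s i p.
Proof.
move=> cupA endA; apply: leq_trans (leq_maxr _ _).
by apply: leq_bigmax_cond; rewrite cupA.
Qed.

Lemma alpha_leq i p m : 0 < m ->
  (forall A, is_cup cup A -> ends_with s i p A -> #|A| <= m) -> alpha cup s i p <= m.
Proof.
move=> m_gt0 bound; rewrite geq_max m_gt0.
by apply/bigmax_leqP => A /andP[]; apply: bound.
Qed.

Lemma alpha_lt i p m : 1 < m ->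
  (forall A, is_cup cup A -> ends_with s i p A -> #|A| < m) -> alpha cup s i p < m.
Proof.
move=> m_gt1 bound; rewrite -(ltn_predK m_gt1) ltnS.
by apply: alpha_leq => [|A cupA endA]; rewrite -ltnS (ltn_predK m_gt1) //; apply: bound.
Qed.

Lemma alpha_mono i j p : i <= j -> alpha cup s i p <= alpha cup s j p.
Proof.
move=> le_ij; apply: alpha_leq (alpha_gt0 _ _) _ => A cupA endA.
by apply: leq_card_alpha => //; apply: ends_withW endA.
Qed.

Lemma cup_card_lt b (A : {set 'I_n}) : cup_free cup b -> is_cup cup A -> #|A| < b.
Proof.
move=> free_b cupA; rewrite ltnNge; apply/negP => le_bA.
pose B := [set z in take b (pts A)].
have ptsB : pts B = take b (pts A).
  by apply: pts_eq (take_sorted _ (pts_sorted A)) _ => z; rewrite inE.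
apply: (free_b B); first by rewrite /is_cup ptsB triples_ok_take.
by rewrite -size_pts ptsB size_takel // size_pts.
Qed.

Lemma alpha_lt_cup_free b i p : cup_free cup b -> alpha cup s i p < b.
Proof.
move=> free_b; apply: alpha_lt => [|A cupA _]; last exact: cup_card_lt free_b cupA.
by rewrite -(cards1 p); apply: cup_card_lt free_b _; rewrite /is_cup pts_set1.
Qed.

Lemma alpha_edge_gt1 (x y : 'I_n) : x < y -> 1 < alpha cup s (s x y) y.
Proof.
move=> lt_xy; have <- : #|[set x; y]| = 2 by rewrite -size_pts pts_set2.
apply: leq_card_alpha; first by rewrite /is_cup pts_set2.
by rewrite (@ends_with_rcons2 _ _ _ x [::] _ (pts_set2 lt_xy)).
Qed.

Section SlopeLabeling.
Hypothesis cup_of_slope_le :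
  forall x y z : 'I_n, x < y -> y < z -> s x y <= s y z -> cup x y z.

Lemma card_lt_alpha_extend (x y : 'I_n) (A : {set 'I_n}) : x < y ->
  is_cup cup A -> ends_with s (s x y) x A -> #|A| < alpha cup s (s x y) y.
Proof.
move=> lt_xy cupA /ends_withP[l [w [ptsA le_wx]]].
have sorted_lwx : sorted ltI (rcons (rcons l w) x) by rewrite -ptsA pts_sorted.
have lt_wx : w < x by move: sorted_lwx; rewrite sorted_rcons2 => /andP[].
have ptsAy : pts (y |: A) = rcons (rcons (rcons l w) x) y.
  by rewrite pts_setU1_rcons ptsA // sorted_rcons2 sorted_lwx.
have card_Ay : #|y |: A| = #|A|.+1 by rewrite -!size_pts ptsAy ptsA !size_rcons.
rewrite -card_Ay; apply: leq_card_alpha.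
- by rewrite /is_cup ptsAy triples_ok_rcons -?ptsA // cup_of_slope_le.
- by rewrite (ends_with_rcons2 _ _ ptsAy).
Qed.

Lemma alpha_edge_lt (x y : 'I_n) :
  x < y -> alpha cup s (s x y) x < alpha cup s (s x y) y.
Proof.
move=> lt_xy; apply: alpha_lt; first exact: alpha_edge_gt1.
by move=> A; apply: card_lt_alpha_extend.
Qed.

Lemma alpha_inj a (x y : 'I_n) :
  (forall u v : 'I_n, u < v -> 1 <= s u v <= a - 2) ->
  (forall i, 1 <= i <= a - 2 -> alpha cup s i x = alpha cup s i y) -> x = y.
Proof.
move=> label_range eq_alpha; apply: ord_inj; case: (ltngtP x y) => // lt;
  by have := alpha_edge_lt lt; rewrite eq_alpha ?ltnn ?label_range.
Qed.

End SlopeLabeling.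

End Alpha.

End IncreasingListing.

Theorem theorem3p6 (n a b : nat) (cup : 'I_n -> 'I_n -> 'I_n -> bool)
    (s : 'I_n -> 'I_n -> nat) :
  cap_free cup a -> cup_free cup b -> slope_labeling cup a s ->
  (forall p : 'I_n,
      (forall i, 1 <= i <= a - 2 -> 1 <= alpha cup s i p <= b - 1) /\
      (forall i, 1 <= i -> i < a - 2 -> alpha cup s i p <= alpha cup s i.+1 p))
  /\ (forall x y : 'I_n, x < y -> alpha cup s (s x y) x < alpha cup s (s x y) y)
  /\ (forall x y : 'I_n,
        (forall i, 1 <= i <= a - 2 -> alpha cup s i x = alpha cup s i y) -> x = y).
Proof.
move=> _ free_b [label_range cup_of_slope_le].
split; [move=> p; split | split].
- move=> i _; have := alpha_lt_cup_free s i p free_b.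
  by rewrite alpha_gt0; case: b {free_b} => // b'; rewrite subSS subn0.
- by move=> i _ _; apply: alpha_mono.
- exact: alpha_edge_lt cup_of_slope_le.
- by move=> x y; apply: (alpha_inj cup_of_slope_le label_range).
Qed.
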